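(* Let $A,B,l$ be positive integers and let $\mathcal A\subset\mathbb R^2$ be a set such that $a+b=l-1$ for all $(a,b)\in\mathcal A$. Then there exist $\lambda_1,\lambda_2\in\mathbb R$ with \[a\lambda_1+b\lambda_2\ge1\ \text{ for all }(a,b)\in\mathcal A\qquad\text{and}\qquad \lambda_1A+\lambda_2B<0\] if and only if either \[\inf_{(a,b)\in\mathcal A}a>\frac{A(l-1)}{A+B}\qquad\text{or}\qquad\inf_{(a,b)\in\mathcal A}b>\frac{B(l-1)}{A+B}.\] *)

From HB Require Import structures.
From mathcomp Require Import all_boot all_order all_algebra.
From mathcomp Require Import all_classical all_reals.
From mathcomp Require Export ereal.
Set Implicit Arguments. Unset Strict Implicit. Unset Printing Implicit Defensive.

From HB Require Import structures.
From mathcomp Require Import all_boot all_order all_algebra.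
From mathcomp Require Import all_classical all_reals ereal.
From mathcomp Require Import ring lra.
Set Implicit Arguments. Unset Strict Implicit. Unset Printing Implicit Defensive.
Import Order.TTheory GRing.Theory Num.Theory.
Local Open Scope classical_set_scope.
Local Open Scope ring_scope.

(* On the line [f + g = L] the functional [f l1 + g l2] equals
   [L l2 + f (l1 - l2)], and [l1 A + l2 B = (A + B) (l2 + (l1 - l2) c)] with
   [c = A / (A + B)].  So a separating pair with [d = l1 - l2 > 0] forces
   [f >= c L + 1/d] on the set, and conversely a bound [f >= m > c L] is met by
   [d = (1 + L) / (m - c L)] and [l2 = - d c - 1].  The case [d < 0] is the same
   with the coordinates exchanged, and [d = 0] forces the set to be empty, where
   both infima are [+oo]. *)

Lemma ereal_inf_image_gtP (R : realType) (T : Type) (S : set T) (f : T -> R)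
    (x : R) :
  (x%:E < ereal_inf [set (f p)%:E | p in S])%E <->
  exists2 m, x < m & forall p, S p -> m <= f p.
Proof.
have inf_le p : S p -> (ereal_inf [set (f p)%:E | p in S] <= (f p)%:E)%E.
  by move=> Sp; apply: ereal_inf_lbound; exists p.
split=> [|[m xm mS]]; last first.
  apply: (@lt_le_trans _ _ m%:E); first by rewrite lte_fin.
  by apply/ereal_infP => _ [p Sp <-]; rewrite lee_fin mS.
case E: ereal_inf => [r| |] //= xr.
- by exists r => // p /inf_le; rewrite E lee_fin.
- by exists (x + 1) => [|p /inf_le]; rewrite ?E ?leye_eq //; lra.
Qed.

Section SeparationOnLine.
Variables (R : realType) (T : Type) (f g : T -> R) (A B L : R).
Hypotheses (A_gt0 : 0 < A) (B_gt0 : 0 < B) (L_ge0 : 0 <= L).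

Definition separating (S : set T) (l1 l2 : R) :=
  (forall p, S p -> 1 <= f p * l1 + g p * l2) /\ l1 * A + l2 * B < 0.

Variable S : set T.
Hypothesis S_line : forall p, S p -> f p + g p = L.

Local Notation c := (A / (A + B)).
Let AB_gt0 : 0 < A + B. Proof. exact: addr_gt0. Qed.

Lemma functional_on_line p l1 l2 :
  S p -> f p * l1 + g p * l2 = L * l2 + f p * (l1 - l2).
Proof. by move/S_line <-; ring. Qed.

Lemma weight_factor l1 l2 :
  l1 * A + l2 * B = (A + B) * (l2 + (l1 - l2) * c).
Proof. by field; rewrite gt_eqF. Qed.

Lemma weight_factor_lt0 l1 l2 :
  l1 * A + l2 * B < 0 -> l2 + (l1 - l2) * c < 0.
Proof. by rewrite weight_factor pmulr_rlt0. Qed.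

Lemma separating_diag_set0 l : separating S l l -> S = set0.
Proof.
case=> sepS /weight_factor_lt0; rewrite subrr mul0r addr0 => l_lt0.
apply/seteqP; split=> // p Sp; have := sepS p Sp.
rewrite functional_on_line // subrr mulr0 addr0.
by have := mulr_ge0_le0 L_ge0 (ltW l_lt0); lra.
Qed.

Lemma separating_lbound l1 l2 : separating S l1 l2 -> l2 < l1 ->
  forall p, S p -> A * L / (A + B) + (l1 - l2)^-1 <= f p.
Proof.
case=> sepS /weight_factor_lt0 weight_lt0 l21 p Sp.
have d_gt0 : 0 < l1 - l2 by lra.
have := sepS p Sp; rewrite functional_on_line // => sep_p.
have L_weight := mulr_ge0_le0 L_ge0 (ltW weight_lt0).
rewrite -(ler_pM2r d_gt0) mulrDl mulVf ?gt_eqF //.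
have -> : A * L / (A + B) = L * c by ring.
lra.
Qed.

Lemma separating_of_lbound m : A * L / (A + B) < m ->
  (forall p, S p -> m <= f p) -> exists l1 l2, separating S l1 l2.
Proof.
have -> : A * L / (A + B) = L * c by ring.
move=> gap_gt0 m_le.
have d_gt0 : 0 < (1 + L) / (m - L * c).
  by apply: divr_gt0; move: L_ge0; lra.
have d_gap : (1 + L) / (m - L * c) * (m - L * c) = 1 + L.
  by rewrite mulfVK // gt_eqF //; lra.
set d := (1 + L) / (m - L * c) in d_gt0 d_gap *.
exists (d - d * c - 1), (- (d * c) - 1); split.
  move=> p Sp; rewrite functional_on_line //.
  have m_d : m * d <= f p * d by rewrite ler_pM2r // m_le.
  lra.
by rewrite weight_factor pmulr_rlt0 //; lra.
Qed.

End SeparationOnLine.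

Lemma separating_sym (R : realType) (T : Type) (f g : T -> R) (A B : R)
    (S : set T) (l1 l2 : R) :
  separating f g A B S l1 l2 <-> separating g f B A S l2 l1.
Proof.
by rewrite /separating; under eq_forall do rewrite addrC; rewrite addrC.
Qed.

Theorem lemma4p9 (R : realType) (A B l : nat)
  (hA : (0 < A)%N) (hB : (0 < B)%N) (hl : (0 < l)%N)
  (S : set (R * R))
  (hS : forall p, S p -> p.1 + p.2 = l%:R - 1) :
  (exists l1 l2 : R,
      (forall p, S p -> 1 <= p.1 * l1 + p.2 * l2) /\
      l1 * A%:R + l2 * B%:R < 0) <->
  ((((A%:R * (l%:R - 1)) / (A%:R + B%:R))%:E < ereal_inf [set (p.1)%:E | p in S])%E \/
   (((B%:R * (l%:R - 1)) / (A%:R + B%:R))%:E < ereal_inf [set (p.2)%:E | p in S])%E).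
Proof.
have A_gt0 : 0 < A%:R :> R by rewrite ltr0n.
have B_gt0 : 0 < B%:R :> R by rewrite ltr0n.
have L_ge0 : 0 <= l%:R - 1 :> R by rewrite subr_ge0 ler1n.
have hS' p : S p -> p.2 + p.1 = l%:R - 1 by rewrite addrC; apply: hS.
rewrite !ereal_inf_image_gtP [in B%:R * _ / _](addrC A%:R).
split=> [[l1 [l2 sepS]]|[[m gap m_le]|[m gap m_le]]].
- case: (ltgtP l1 l2) => [l12|l21|l12].
  + move/separating_sym: sepS => /separating_lbound lb; right.
    exists (B%:R * (l%:R - 1) / (B%:R + A%:R) + (l2 - l1)^-1).
      by rewrite ltrDl invr_gt0 subr_gt0.
    exact: lb.
  + left; exists (A%:R * (l%:R - 1) / (A%:R + B%:R) + (l1 - l2)^-1).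
      by rewrite ltrDl invr_gt0 subr_gt0.
    exact: separating_lbound sepS l21.
  + move: sepS; rewrite l12 => /(separating_diag_set0 A_gt0 B_gt0 L_ge0 hS) S0.
    by left; exists (A%:R * (l%:R - 1) / (A%:R + B%:R) + 1); rewrite ?S0 ?ltrDl.
- have [l1 [l2 sepS]] := separating_of_lbound A_gt0 B_gt0 L_ge0 hS gap m_le.
  by exists l1, l2.
- have [l1 [l2 sepS]] := separating_of_lbound B_gt0 A_gt0 L_ge0 hS' gap m_le.
  by exists l2, l1; apply/separating_sym.
Qed.
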